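(* Under the standing assumptions below, one of the following holds: (I') there exist maps $u_1:M\to M'$ and $v_1:N\to N'$ such that for all $m\in M$, $n\in N$: $\phi\left(\left[\begin{smallmatrix} 1 & m\\ 0 & 0\end{smallmatrix}\right]\right)=\left[\begin{smallmatrix} 1 & u_1(m)\\ v_1(0) & 0\end{smallmatrix}\right]$ and $\phi\left(\left[\begin{smallmatrix} 1 & 0\\ n & 0\end{smallmatrix}\right]\right)=\left[\begin{smallmatrix} 1 & u_1(0)\\ v_1(n) & 0\end{smallmatrix}\right]$; (I'') there exist maps $u_2:N\to M'$ and $v_2:M\to N'$ such that for all $m\in M$, $n\in N$: $\phi\left(\left[\begin{smallmatrix} 1 & m\\ 0 & 0\end{smallmatrix}\right]\right)=\left[\begin{smallmatrix} 0 & u_2(0)\\ v_2(m) & 1\end{smallmatrix}\right]$ and $\phi\left(\left[\begin{smallmatrix} 1 & 0\\ n & 0\end{smallmatrix}\right]\right)=\left[\begin{smallmatrix} 0 & u_2(n)\\ v_2(0) & 1\end{smallmatrix}\right]$.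
   Context: All rings have an identity $1\neq 0$. Standing assumptions: $R,S,R',S'$ are rings whose only idempotents are $0$ and $1$; $M$ is an $R$-$S$-bimodule, $N$ an $S$-$R$-bimodule, $M'$ an $R'$-$S'$-bimodule, $N'$ an $S'$-$R'$-bimodule; $T=\left[\begin{smallmatrix} R & M\\ N & S\end{smallmatrix}\right]$ and $T'=\left[\begin{smallmatrix} R' & M'\\ N' & S'\end{smallmatrix}\right]$ are the Morita context rings with both Morita maps zero, i.e. the sets of formal matrices with entrywise addition and product $\left[\begin{smallmatrix} r & m\\ n & s\end{smallmatrix}\right]\left[\begin{smallmatrix} r' & m'\\ n' & s'\end{smallmatrix}\right]=\left[\begin{smallmatrix} rr' & rm'+ms'\\ nr'+sn' & ss'\end{smallmatrix}\right]$; and $\phi:T\to T'$ is a ring isomorphism. *)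

From HB Require Import structures.
From mathcomp Require Import all_boot all_order all_algebra.
Set Implicit Arguments. Unset Strict Implicit. Unset Printing Implicit Defensive.
Import GRing.Theory.
Local Open Scope ring_scope.

Definition only_trivial_idempotents (R : nzRingType) : Prop :=
  forall e : R, e * e = e -> e = 0 \/ e = 1.

Record bimod (R S : nzRingType) (M : zmodType) := Bimod {
  lact : R -> M -> M;
  ract : M -> S -> M;
  lactDl : forall (r r' : R) (m : M), lact (r + r') m = lact r m + lact r' m;
  lactDr : forall (r : R) (m m' : M), lact r (m + m') = lact r m + lact r m';
  lactA  : forall (r r' : R) (m : M), lact (r * r') m = lact r (lact r' m);
  lact1  : forall m : M, lact 1 m = m;
  ractDl : forall (m m' : M) (s : S), ract (m + m') s = ract m s + ract m' s;
  ractDr : forall (m : M) (s s' : S), ract m (s + s') = ract m s + ract m s';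
  ractA  : forall (m : M) (s s' : S), ract m (s * s') = ract (ract m s) s';
  ract1  : forall m : M, ract m 1 = m;
  lractA : forall (r : R) (m : M) (s : S), ract (lact r m) s = lact r (ract m s)
}.

(* Formal 2x2 matrices [[r, m], [n, s]] of the Morita context ring
   T = [[R, M], [N, S]] with both Morita maps zero. *)
Record mctx (R S M N : Type) := MC { c11 : R; c12 : M; c21 : N; c22 : S }.

Section MoritaOps.
Variables (R S : nzRingType) (M N : zmodType).
Variables (bM : bimod R S M) (bN : bimod S R N).

Definition mc_add (x y : mctx R S M N) : mctx R S M N :=
  MC (c11 x + c11 y) (c12 x + c12 y) (c21 x + c21 y) (c22 x + c22 y).

Definition mc_mul (x y : mctx R S M N) : mctx R S M N :=
  MC (c11 x * c11 y)
     (lact bM (c11 x) (c12 y) + ract bM (c12 x) (c22 y))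
     (ract bN (c21 x) (c11 y) + lact bN (c22 x) (c21 y))
     (c22 x * c22 y).

Definition mc_one : mctx R S M N := MC 1 0 0 1.
End MoritaOps.

Definition mc_ring_iso (R S R' S' : nzRingType) (M N M' N' : zmodType)
  (bM : bimod R S M) (bN : bimod S R N) (bM' : bimod R' S' M') (bN' : bimod S' R' N')
  (phi : mctx R S M N -> mctx R' S' M' N') : Prop :=
  [/\ bijective phi,
      (forall x y, phi (mc_add x y) = mc_add (phi x) (phi y)),
      (forall x y, phi (mc_mul bM bN x y) = mc_mul bM' bN' (phi x) (phi y))
    & phi (mc_one R S M N) = mc_one R' S' M' N'].

From HB Require Import structures.
From mathcomp Require Import all_boot all_order all_algebra.
Local Open Scope ring_scope.
Import GRing.Theory.
Set Implicit Arguments. Unset Strict Implicit. Unset Printing Implicit Defensive.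

(* In T the matrix e = [1 0; 0 0] is an idempotent, so phi(e) is
   an idempotent of T'.  Since R' and S' only have the idempotents 0 and 1, an
   idempotent [a x; y b] of T' is 0, 1, of the form [1 x; y 0] or of the form
   [0 x; y 1]; as phi is injective and phi(0) = 0, phi(1) = 1, only the last
   two shapes are possible for phi(e).  Now [0 m; 0 0] lies in the Peirce
   corner eT(1-e) and [0 0; n 0] in (1-e)Te, hence their images lie in the
   corresponding corners for f = phi(e).  For each of the two shapes of f these
   corners are computed explicitly: they consist of matrices with a single
   nonzero off-diagonal entry, the entry's position being swapped between the
   two shapes.  Writing [1 m; 0 0] = e + [0 m; 0 0] and
   [1 0; n 0] = e + [0 0; n 0] and using additivity of phi gives (I') when
   f = [1 x; y 0] and (I'') when f = [0 x; y 1]. *)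

Section BimoduleZero.
Variables (R S : nzRingType) (M : zmodType) (b : bimod R S M).

Lemma lact0r (r : R) : lact b r 0 = 0.
Proof. by apply: (addrI (lact b r 0)); rewrite -lactDr !addr0. Qed.

Lemma lact0l (m : M) : lact b 0 m = 0.
Proof. by apply: (addrI (lact b 0 m)); rewrite -lactDl !addr0. Qed.

Lemma ract0r (m : M) : ract b m 0 = 0.
Proof. by apply: (addrI (ract b m 0)); rewrite -ractDr !addr0. Qed.

Lemma ract0l (s : S) : ract b 0 s = 0.
Proof. by apply: (addrI (ract b 0 s)); rewrite -ractDl !addr0. Qed.

End BimoduleZero.

Ltac mc_simp := rewrite ?mulr0 ?mul0r ?mulr1 ?mul1r ?lact1 ?ract1
  ?lact0l ?lact0r ?ract0l ?ract0r ?addr0 ?add0r.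

Lemma double_eq0 (V : zmodType) (a : V) : a + a = a -> a = 0.
Proof. by move=> h; apply: (addrI a); rewrite h addr0. Qed.

Lemma MC_inj {R S M N : Type} {a a' : R} {m m' : M} {n n' : N} {s s' : S}
  (h : MC a m n s = MC a' m' n' s') : [/\ a = a', m = m', n = n' & s = s'].
Proof.
split; [exact: (congr1 (@c11 _ _ _ _) h) | exact: (congr1 (@c12 _ _ _ _) h)
  | exact: (congr1 (@c21 _ _ _ _) h) | exact: (congr1 (@c22 _ _ _ _) h)].
Qed.

Section MoritaRing.
Variables (R S : nzRingType) (M N : zmodType).
Variables (bM : bimod R S M) (bN : bimod S R N).
Local Notation T := (mctx R S M N).
Local Notation mul := (mc_mul bM bN).

Lemma mc_add_idem (x : T) : mc_add x x = x -> x = MC 0 0 0 0.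
Proof.
case: x => a m n s [] ha hm hn hs.
by rewrite (double_eq0 ha) (double_eq0 hm) (double_eq0 hn) (double_eq0 hs).
Qed.

Lemma mc_idempotent_cases :
  only_trivial_idempotents R -> only_trivial_idempotents S ->
  forall f : T, mul f f = f ->
  [\/ f = MC 0 0 0 0, f = mc_one R S M N,
      exists x y, f = MC 1 x y 0 | exists x y, f = MC 0 x y 1].
Proof.
move=> hR hS [a x y b]; rewrite /mc_mul /= => -[ha hx hy hb]; move: hx hy.
case/hR: ha => ->; case/hS: hb => ->; mc_simp.
- by move=> <- <-; apply: Or41.
- by move=> _ _; apply: Or44; exists x, y.
- by move=> _ _; apply: Or43; exists x, y.
- by move=> /double_eq0-> /double_eq0->; apply: Or42.
Qed.

(* Peirce corners of f = [1 x; y 0]: fT(1-f) is the M-entry and (1-f)Tf the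
   N-entry. *)
Lemma peirce_fT1f_10 (x : M) (y : N) (X : T) :
  mul (MC 1 x y 0) X = X -> mul X (MC 1 x y 0) = MC 0 0 0 0 ->
  X = MC 0 (c12 X) 0 0.
Proof.
case: X => p q r s; rewrite /mc_mul /=; mc_simp.
move=> /MC_inj[_ _ hr <-] /MC_inj[p0 _ _ _].
by move: hr; rewrite p0; mc_simp; move=> <-.
Qed.

Lemma peirce_1fTf_10 (x : M) (y : N) (X : T) :
  mul (MC 1 x y 0) X = MC 0 0 0 0 -> mul X (MC 1 x y 0) = X ->
  X = MC 0 0 (c21 X) 0.
Proof.
case: X => p q r s; rewrite /mc_mul /=; mc_simp.
move=> /MC_inj[p0 hq _ _] /MC_inj[_ _ _ s0].
by move: hq; rewrite p0 -s0; mc_simp; move=> ->.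
Qed.

Lemma peirce_fT1f_01 (x : M) (y : N) (X : T) :
  mul (MC 0 x y 1) X = X -> mul X (MC 0 x y 1) = MC 0 0 0 0 ->
  X = MC 0 0 (c21 X) 0.
Proof.
case: X => p q r s; rewrite /mc_mul /=; mc_simp.
move=> /MC_inj[<- hq _ _] /MC_inj[_ _ _ s0].
by move: hq; rewrite s0; mc_simp; move=> <-.
Qed.

Lemma peirce_1fTf_01 (x : M) (y : N) (X : T) :
  mul (MC 0 x y 1) X = MC 0 0 0 0 -> mul X (MC 0 x y 1) = X ->
  X = MC 0 (c12 X) 0 0.
Proof.
case: X => p q r s; rewrite /mc_mul /=; mc_simp.
move=> /MC_inj[_ _ _ s0] /MC_inj[<- _ hr _].
by move: hr; rewrite s0; mc_simp; move=> <-.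
Qed.


Local Notation e := (MC 1 0 0 0 : T).

Lemma e_idem : mul e e = e.
Proof. by rewrite /mc_mul /=; congr MC; mc_simp. Qed.

Lemma e_mulM (m : M) : mul e (MC 0 m 0 0) = MC 0 m 0 0.
Proof. by rewrite /mc_mul /=; congr MC; mc_simp. Qed.

Lemma M_mule (m : M) : mul (MC 0 m 0 0) e = MC 0 0 0 0.
Proof. by rewrite /mc_mul /=; congr MC; mc_simp. Qed.

Lemma e_mulN (n : N) : mul e (MC 0 0 n 0) = MC 0 0 0 0.
Proof. by rewrite /mc_mul /=; congr MC; mc_simp. Qed.

Lemma N_mule (n : N) : mul (MC 0 0 n 0) e = MC 0 0 n 0.
Proof. by rewrite /mc_mul /=; congr MC; mc_simp. Qed.

Lemma e_addM (m : M) : MC 1 m 0 0 = mc_add e (MC 0 m 0 0).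
Proof. by rewrite /mc_add /=; congr MC; mc_simp. Qed.

Lemma e_addN (n : N) : MC 1 0 n 0 = mc_add e (MC 0 0 n 0).
Proof. by rewrite /mc_add /=; congr MC; mc_simp. Qed.

End MoritaRing.

Section RingIso.
Variables (R S R' S' : nzRingType) (M N M' N' : zmodType).
Variables (bM : bimod R S M) (bN : bimod S R N).
Variables (bM' : bimod R' S' M') (bN' : bimod S' R' N').
Variable phi : mctx R S M N -> mctx R' S' M' N'.
Hypothesis phi_inj : injective phi.
Hypothesis phiD : forall x y, phi (mc_add x y) = mc_add (phi x) (phi y).
Hypothesis phiM :
  forall x y, phi (mc_mul bM bN x y) = mc_mul bM' bN' (phi x) (phi y).
Hypothesis phi1 : phi (mc_one R S M N) = mc_one R' S' M' N'.

Local Notation e := (MC 1 0 0 0 : mctx R S M N).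

Lemma phi0 : phi (MC 0 0 0 0) = MC 0 0 0 0.
Proof.
apply: mc_add_idem; rewrite -phiD /mc_add /=.
by congr (phi (MC _ _ _ _)); mc_simp.
Qed.

Lemma phi_e_idem : mc_mul bM' bN' (phi e) (phi e) = phi e.
Proof. by rewrite -phiM e_idem. Qed.

Lemma phi_e_neq0 : phi e <> MC 0 0 0 0.
Proof.
by rewrite -phi0 => /phi_inj/(congr1 (@c11 _ _ _ _))/eqP; rewrite oner_eq0.
Qed.

Lemma phi_e_neq1 : phi e <> mc_one R' S' M' N'.
Proof.
by rewrite -phi1 => /phi_inj/(congr1 (@c22 _ _ _ _))/eqP; rewrite eq_sym oner_eq0.
Qed.

Lemma phi_lineM_10 (x : M') (y : N') (m : M) : phi e = MC 1 x y 0 ->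
  phi (MC 1 m 0 0) = MC 1 (x + c12 (phi (MC 0 m 0 0))) y 0.
Proof.
move=> fE.
have corner : phi (MC 0 m 0 0) = MC 0 (c12 (phi (MC 0 m 0 0))) 0 0.
  by apply: (@peirce_fT1f_10 _ _ _ _ bM' bN' x y); rewrite -fE -phiM
    ?e_mulM ?M_mule ?phi0.
by rewrite e_addM phiD fE corner /mc_add /=; congr MC; mc_simp.
Qed.

Lemma phi_lineN_10 (x : M') (y : N') (n : N) : phi e = MC 1 x y 0 ->
  phi (MC 1 0 n 0) = MC 1 x (y + c21 (phi (MC 0 0 n 0))) 0.
Proof.
move=> fE.
have corner : phi (MC 0 0 n 0) = MC 0 0 (c21 (phi (MC 0 0 n 0))) 0.
  by apply: (@peirce_1fTf_10 _ _ _ _ bM' bN' x y); rewrite -fE -phiM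
    ?e_mulN ?N_mule ?phi0.
by rewrite e_addN phiD fE corner /mc_add /=; congr MC; mc_simp.
Qed.

Lemma phi_lineM_01 (x : M') (y : N') (m : M) : phi e = MC 0 x y 1 ->
  phi (MC 1 m 0 0) = MC 0 x (y + c21 (phi (MC 0 m 0 0))) 1.
Proof.
move=> fE.
have corner : phi (MC 0 m 0 0) = MC 0 0 (c21 (phi (MC 0 m 0 0))) 0.
  by apply: (@peirce_fT1f_01 _ _ _ _ bM' bN' x y); rewrite -fE -phiM
    ?e_mulM ?M_mule ?phi0.
by rewrite e_addM phiD fE corner /mc_add /=; congr MC; mc_simp.
Qed.

Lemma phi_lineN_01 (x : M') (y : N') (n : N) : phi e = MC 0 x y 1 ->
  phi (MC 1 0 n 0) = MC 0 (x + c12 (phi (MC 0 0 n 0))) y 1.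
Proof.
move=> fE.
have corner : phi (MC 0 0 n 0) = MC 0 (c12 (phi (MC 0 0 n 0))) 0 0.
  by apply: (@peirce_1fTf_01 _ _ _ _ bM' bN' x y); rewrite -fE -phiM
    ?e_mulN ?N_mule ?phi0.
by rewrite e_addN phiD fE corner /mc_add /=; congr MC; mc_simp.
Qed.

End RingIso.

Theorem corollary4p5 (R S R' S' : nzRingType) (M N M' N' : zmodType)
  (bM : bimod R S M) (bN : bimod S R N) (bM' : bimod R' S' M') (bN' : bimod S' R' N')
  (hR : only_trivial_idempotents R) (hS : only_trivial_idempotents S)
  (hR' : only_trivial_idempotents R') (hS' : only_trivial_idempotents S')
  (phi : mctx R S M N -> mctx R' S' M' N')
  (hphi : mc_ring_iso bM bN bM' bN' phi) :
  (exists (u1 : M -> M') (v1 : N -> N'),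
     forall (m : M) (n : N),
       phi (MC 1 m 0 0) = MC 1 (u1 m) (v1 0) 0 /\
       phi (MC 1 0 n 0) = MC 1 (u1 0) (v1 n) 0)
  \/
  (exists (u2 : N -> M') (v2 : M -> N'),
     forall (m : M) (n : N),
       phi (MC 1 m 0 0) = MC 0 (u2 0) (v2 m) 1 /\
       phi (MC 1 0 n 0) = MC 0 (u2 n) (v2 0) 1).
Proof.
case: hphi => [/bij_inj phi_inj phiD phiM phi1].
have phi_zero := phi0 phiD.
have [f0|f1|[x [y fE]]|[x [y fE]]] :=
  mc_idempotent_cases hR' hS' (phi_e_idem phiM).
- by case: (phi_e_neq0 phi_inj phiD).
- by case: (phi_e_neq1 phi_inj phi1).
- left; exists (fun m => x + c12 (phi (MC 0 m 0 0))).
  exists (fun n => y + c21 (phi (MC 0 0 n 0))) => m n.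
  rewrite (phi_lineM_10 phiD phiM m fE) (phi_lineN_10 phiD phiM n fE).
  by rewrite phi_zero /= !addr0.
- right; exists (fun n => x + c12 (phi (MC 0 0 n 0))).
  exists (fun m => y + c21 (phi (MC 0 m 0 0))) => m n.
  rewrite (phi_lineM_01 phiD phiM m fE) (phi_lineN_01 phiD phiM n fE).
  by rewrite phi_zero /= !addr0.
Qed.
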